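(* Let $0\le\lambda<\gamma\le\delta$. Let $\mathfrak{f}\in\mathcal{R}_H^0(\gamma,\delta,\lambda)$ and let $\varphi\in\mathcal{A}$ be such that $\mathrm{Re}\left(\frac{\varphi(z)}{z}\right)>\frac12$ for all $z\in\mathcal{U}$. Then $\mathfrak{f}\,\widetilde{\ast}\,\varphi\in\mathcal{R}_H^0(\gamma,\delta,\lambda)$.
   Context: Let $\mathcal{U}=\{z\in\mathbb{C}:|z|<1\}$ and let $\mathcal{A}$ be the class of analytic functions $F$ in $\mathcal{U}$ with $F(0)=0$, $F'(0)=1$. $\mathcal{H}^0$ denotes the class of complex-valued harmonic functions $\mathfrak{f}=\mathfrak{s}+\overline{\mathfrak{t}}$ on $\mathcal{U}$, where $\mathfrak{s}(z)=z+\sum_{m\ge2}a_mz^m$ and $\mathfrak{t}(z)=\sum_{m\ge2}b_mz^m$ are analytic in $\mathcal{U}$. For real $0\le\lambda<\gamma\le\delta$, $\mathcal{R}_H^0(\gamma,\delta,\lambda)$ is the class of $\mathfrak{f}=\mathfrak{s}+\overline{\mathfrak{t}}\in\mathcal{H}^0$ such that for all $z\in\mathcal{U}$, $\mathrm{Re}\left[\gamma\mathfrak{s}'(z)+\delta z\mathfrak{s}''(z)+\frac{\delta-\gamma}{2}z^2\mathfrak{s}'''(z)-\lambda\right]>\left|\gamma\mathfrak{t}'(z)+\delta z\mathfrak{t}''(z)+\frac{\delta-\gamma}{2}z^2\mathfrak{t}'''(z)\right|$. For analytic $g(z)=\sum c_mz^m$, $h(z)=\sum d_mz^m$, $(g\ast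 h)(z)=\sum c_md_mz^m$. For harmonic $\mathfrak{f}=\mathfrak{s}+\overline{\mathfrak{t}}$ and analytic $\varphi$, $\mathfrak{f}\,\widetilde{\ast}\,\varphi=\mathfrak{s}\ast\varphi+\overline{\mathfrak{t}\ast\varphi}$. Here $\varphi(z)/z$ at $z=0$ means its limiting value $1$. *)

From Stdlib Require Import Reals.
From Coquelicot Require Import Coquelicot.
Open Scope R_scope.

(* An analytic function F(z) = sum_m c m z^m on the unit disk U is represented
   by its Taylor coefficient sequence c : nat -> C; analyticity in U means the
   power series converges at every z with |z| < 1. *)

(* complex-valued series sum (componentwise; equals the sum when convergent) *)
Definition CSeries (u : nat -> C) : C :=
  (Series (fun n => Re (u n)), Series (fun n => Im (u n))).

Definition analytic_in_U (c : nat -> C) : Prop :=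
  forall z : C, Cmod z < 1 -> ex_series (fun m => (c m * pow_n z m)%C).

Fixpoint ff (m k : nat) : nat :=
  match k with
  | O => 1%nat
  | S k' => (ff m k' * (m - k'))%nat
  end.

(* the k-th derivative of the power series with coefficients c, evaluated at z,
   obtained by term-wise differentiation: sum_m c_m (d/dz)^k z^m *)
Definition PSder (k : nat) (c : nat -> C) (z : C) : C :=
  CSeries (fun m => (RtoC (INR (ff m k)) * c m * pow_n z (m - k))%C).

Definition PSval (c : nat -> C) (z : C) : C := PSder 0 c z.

Definition in_A (c : nat -> C) : Prop :=
  analytic_in_U c /\ c 0%nat = RtoC 0 /\ c 1%nat = RtoC 1.

(* class H^0: f = s + conj t, s(z) = z + sum_{m>=2} a_m z^m,
   t(z) = sum_{m>=2} b_m z^m, both analytic in U.  The harmonic function is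
   represented by the pair (a, b) of coefficient sequences of (s, t). *)
Definition in_H0 (a b : nat -> C) : Prop :=
  analytic_in_U a /\ analytic_in_U b /\
  a 0%nat = RtoC 0 /\ a 1%nat = RtoC 1 /\
  b 0%nat = RtoC 0 /\ b 1%nat = RtoC 0.

Definition Lop (gamma delta : R) (c : nat -> C) (z : C) : C :=
  (RtoC gamma * PSder 1 c z + RtoC delta * z * PSder 2 c z
  + RtoC ((delta - gamma) / 2) * (z * z) * PSder 3 c z)%C.

Definition RH0 (gamma delta lambda : R) (a b : nat -> C) : Prop :=
  in_H0 a b /\
  forall z : C, Cmod z < 1 ->
    Re (Lop gamma delta a z - RtoC lambda)%C > Cmod (Lop gamma delta b z).

Definition hadamard (c d : nat -> C) : nat -> C := fun m => (c m * d m)%C.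

(* f ~* phi = s * phi + conj (t * phi): represented by the pair *)
Definition harm_conv (a b phi : nat -> C) : (nat -> C) * (nat -> C) :=
  (hadamard a phi, hadamard b phi).

(* phi(z)/z, with value 1 (its limit) at z = 0 *)
Definition phi_over_z (phi : nat -> C) (z : C) : C :=
  if Req_EM_T (Cmod z) 0 then RtoC 1 else (PSval phi z / z)%C.

From Stdlib Require Import Reals Lra Lia.
From Coquelicot Require Import Coquelicot.
Open Scope R_scope.

(* Lop acts diagonally on Taylor coefficients: Lop g (z) = sum_n K (n+1) g_(n+1) z^n with
   K m = gamma m + delta m (m-1) + (delta-gamma)/2 m (m-1) (m-2).  Hence, for the convolution
   with phi, the coefficients of Lop s and Lop t are multiplied by those of P(z) = phi(z)/z.
   Choosing |e| <= 1 with Re (e Lop t (z)) = - |Lop t (z)|, the claim at z reduces to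
   Re (F * P)(z) > lambda for the Hadamard product of P with F = Lop s + e Lop t, and
   Re F > lambda holds on U by hypothesis.

   If Re F >= lambda and Re P >= p0 / 2 with p0 = P(0) real, then Re (F * P) >= lambda p0.
   Indeed, write z = u v and let w range over the N-th roots of unity: for polynomials of
   degree < N/2, the mean of F(u conj w) (P(v w) + conj P(v w) - p0) is (F * P)(u v), so
   Re (F * P)(u v) is a mean of values of Re F with weights 2 Re P(v w) - p0 >= 0 of mean p0;
   the truncation errors vanish in the limit.  Strictness comes from the same inequality
   applied with P(w) = 1 / (1 - r w) - (1 - r) / (1 + r), which gives Harnack's bound
   Re F(r w) - lambda >= (1 - r) / (1 + r) (Re F(0) - lambda) > 0. *)

Lemma Cext (x y : C) : Re x = Re y -> Im x = Im y -> x = y.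
Proof. destruct x, y; unfold Re, Im; simpl; intros -> ->; reflexivity. Qed.

Lemma Re_le_Cmod (x : C) : Rabs (Re x) <= Cmod x.
Proof. exact (Rle_trans _ _ _ (Rmax_l _ _) (Rmax_Cmod x)). Qed.

Lemma Im_le_Cmod (x : C) : Rabs (Im x) <= Cmod x.
Proof. exact (Rle_trans _ _ _ (Rmax_r _ _) (Rmax_Cmod x)). Qed.

Lemma Re_add (x y : C) : Re (x + y) = Re x + Re y.
Proof. reflexivity. Qed.

Lemma Re_sub_RtoC (x : C) (r : R) : Re (x - RtoC r) = Re x - r.
Proof. destruct x; unfold Re; simpl; ring. Qed.

Fixpoint csum (u : nat -> C) (n : nat) : C :=
  match n with O => RtoC 0 | S n => (csum u n + u n)%C end.

Fixpoint rsum (a : nat -> R) (n : nat) : R :=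
  match n with O => 0 | S n => rsum a n + a n end.

Lemma csum_ext (u v : nat -> C) n :
  (forall i, (i < n)%nat -> u i = v i) -> csum u n = csum v n.
Proof. induction n as [|n IH]; intros H; simpl; auto. rewrite IH, H; auto. Qed.

Lemma csum_plus (u v : nat -> C) n : csum (fun i => u i + v i)%C n = (csum u n + csum v n)%C.
Proof. induction n as [|n IH]; simpl. ring. rewrite IH; ring. Qed.

Lemma csum_scal_l (k : C) (u : nat -> C) n : csum (fun i => k * u i)%C n = (k * csum u n)%C.
Proof. induction n as [|n IH]; simpl. ring. rewrite IH; ring. Qed.

Lemma csum_const (c : C) n : csum (fun _ => c) n = (RtoC (INR n) * c)%C.
Proof.
  induction n as [|n IH]; simpl csum. cbn. ring.
  rewrite IH, S_INR, RtoC_plus. ring.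
Qed.

Lemma csum_conj (u : nat -> C) n : Cconj (csum u n) = csum (fun i => Cconj (u i)) n.
Proof.
  induction n as [|n IH]; simpl. apply Cext; unfold Re, Im; simpl; ring.
  rewrite Cplus_conj, IH; reflexivity.
Qed.

Lemma csum_swap (u : nat -> nat -> C) n m :
  csum (fun i => csum (u i) m) n = csum (fun j => csum (fun i => u i j) n) m.
Proof.
  induction n as [|n IH]; simpl.
  - rewrite csum_const. ring.
  - rewrite IH, <- csum_plus. reflexivity.
Qed.

Lemma csum_mult (u v : nat -> C) n m :
  (csum u n * csum v m)%C = csum (fun i => csum (fun j => u i * v j) m)%C n.
Proof.
  induction n as [|n IH]; simpl. ring.
  rewrite <- IH, csum_scal_l. ring.
Qed.

Lemma csum_delta (x : C) m M : (m < M)%nat ->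
  csum (fun n => if Nat.eqb m n then x else RtoC 0) M = x.
Proof.
  induction M as [|M IH]; intros Hm; [lia|]. simpl.
  destruct (Nat.eqb_spec m M) as [<-|Hne].
  - rewrite (csum_ext _ (fun _ => RtoC 0)), csum_const. ring.
    intros i Hi. destruct (Nat.eqb_spec m i); [lia | reflexivity].
  - rewrite IH by lia. ring.
Qed.

Lemma Re_csum (u : nat -> C) n : Re (csum u n) = rsum (fun i => Re (u i)) n.
Proof. induction n as [|n IH]; simpl; auto. rewrite <- IH; reflexivity. Qed.

Lemma rsum_ext (a b : nat -> R) n :
  (forall i, (i < n)%nat -> a i = b i) -> rsum a n = rsum b n.
Proof. induction n as [|n IH]; intros H; simpl; auto. rewrite IH, H; auto. Qed.

Lemma rsum_nonneg (a : nat -> R) n : (forall i, (i < n)%nat -> 0 <= a i) -> 0 <= rsum a n.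
Proof.
  induction n as [|n IH]; intros H; simpl. lra.
  assert (0 <= a n) by auto. assert (0 <= rsum a n) by auto. lra.
Qed.

Lemma rsum_sum_n (a : nat -> R) n : rsum a (S n) = sum_n a n.
Proof.
  induction n as [|n IH]. simpl. rewrite sum_O. ring.
  rewrite sum_Sn, <- IH. reflexivity.
Qed.

(** * Roots of unity *)

Definition cis (x : R) : C := (cos x, sin x).

Lemma cis_add x y : cis (x + y) = (cis x * cis y)%C.
Proof. apply Cext; unfold Re, Im; simpl; [rewrite cos_plus | rewrite sin_plus]; ring. Qed.

Lemma cis_pow x n : (cis x ^ n)%C = cis (INR n * x).
Proof.
  induction n as [|n IH]; simpl Cpow.
  - rewrite Rmult_0_l. apply Cext; unfold Re, Im; simpl; [rewrite cos_0 | rewrite sin_0]; reflexivity.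
  - rewrite IH, S_INR, <- cis_add. f_equal. ring.
Qed.

Lemma cis_conj_mul x : (Cconj (cis x) * cis x)%C = RtoC 1.
Proof.
  apply Cext; unfold Re, Im; simpl.
  - rewrite <- (sin2_cos2 x); unfold Rsqr; ring.
  - ring.
Qed.

Lemma Cmod_cis x : Cmod (cis x) = 1.
Proof.
  unfold Cmod, cis; cbn [fst snd]. rewrite <- sqrt_1. f_equal.
  rewrite <- (sin2_cos2 x); unfold Rsqr; ring.
Qed.

Lemma cis_ne_1 x : 0 < x < 2 * PI -> cis x <> RtoC 1.
Proof.
  intros Hx Hc.
  assert (Hcos : cos (2 * (x / 2)) = 1).
  { replace (2 * (x / 2)) with x by field. exact (f_equal fst Hc). }
  rewrite cos_2a_sin in Hcos.
  assert (0 < sin (x / 2)) by (apply sin_gt_0; lra).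
  nra.
Qed.

Lemma csum_geom (w : C) N : ((w - 1) * csum (fun k => w ^ k) N)%C = (w ^ N - 1)%C.
Proof. induction N as [|N IH]; cbn [csum Cpow]. ring. rewrite Cmult_plus_distr_l, IH; ring. Qed.

Definition root_unity (N : nat) : C := cis (2 * PI / INR N).

Lemma Cmod_root_unity N : Cmod (root_unity N) = 1.
Proof. apply Cmod_cis. Qed.

Lemma csum_root_unity_pow N d : (0 < d < N)%nat ->
  csum (fun k => (root_unity N ^ k) ^ d)%C N = RtoC 0.
Proof.
  intros Hd.
  set (q := (root_unity N ^ d)%C).
  assert (HN : 0 < INR N) by (apply lt_0_INR; lia).
  assert (Hq : q = cis (2 * PI * (INR d / INR N))).
  { unfold q, root_unity. rewrite cis_pow. f_equal. field. lra. }
  assert (HqN : (q ^ N)%C = RtoC 1).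
  { rewrite Hq, cis_pow. replace (INR N * (2 * PI * (INR d / INR N))) with (0 + 2 * INR d * PI)
      by (field; lra).
    apply Cext; unfold Re, Im; simpl; [rewrite cos_period, cos_0 | rewrite sin_period, sin_0]; auto. }
  assert (Hq1 : q <> RtoC 1).
  { rewrite Hq. apply cis_ne_1. assert (Hpi := PI_RGT_0).
    assert (0 < INR d) by (apply lt_0_INR; lia).
    assert (INR d < INR N) by (apply lt_INR; lia).
    assert (0 < INR d / INR N < 1).
    { split. apply Rdiv_lt_0_compat; lra.
      apply (Rmult_lt_reg_r (INR N)); [lra|]. unfold Rdiv. rewrite Rmult_assoc, Rinv_l; lra. }
    nra. }
  rewrite (csum_ext _ (fun k => q ^ k)%C)
    by (intros k _; unfold q; rewrite <- !Cpow_mult_r, Nat.mul_comm; reflexivity).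
  assert (Hq1' : (q - 1)%C <> RtoC 0) by (intros H; apply Hq1, Ceq_minus, H).
  assert (Hg := csum_geom q N). rewrite HqN in Hg.
  replace (csum (fun k => q ^ k) N)%C with (/ (q - 1) * ((q - 1) * csum (fun k => q ^ k) N))%C
    by (field; exact Hq1').
  rewrite Hg. ring.
Qed.

Lemma unit_conj_pow_mul (x : C) m : (Cconj x * x)%C = RtoC 1 -> (Cconj x ^ m * x ^ m)%C = RtoC 1.
Proof. intros H. rewrite <- Cpow_mult_l, H. apply Cpow_1_l. Qed.

Lemma root_unity_pow_conj_mul N k : (Cconj (root_unity N ^ k) * root_unity N ^ k)%C = RtoC 1.
Proof. rewrite Cpow_conj. apply unit_conj_pow_mul, cis_conj_mul. Qed.

Lemma csum_root_unity_orth N m n : (m < N)%nat -> (n < N)%nat ->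
  csum (fun k => Cconj (root_unity N ^ k) ^ m * (root_unity N ^ k) ^ n)%C N =
  if Nat.eqb m n then RtoC (INR N) else RtoC 0.
Proof.
  intros Hm Hn. set (x k := (root_unity N ^ k)%C).
  assert (Hx : forall k, (Cconj (x k) ^ m * x k ^ m)%C = RtoC 1)
    by (intros k; apply unit_conj_pow_mul, root_unity_pow_conj_mul).
  destruct (Nat.eqb_spec m n) as [<-|Hne].
  - rewrite (csum_ext _ (fun _ => RtoC 1)) by auto. rewrite csum_const. ring.
  - destruct (Nat.lt_ge_cases m n).
    + rewrite (csum_ext _ (fun k => x k ^ (n - m))%C).
      { unfold x. apply csum_root_unity_pow. lia. }
      intros k _. replace n with (m + (n - m))%nat at 1 by lia.
      rewrite Cpow_add_r, Cmult_assoc, Hx. ring.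
    + rewrite (csum_ext _ (fun k => Cconj (x k ^ (m - n)))%C).
      { unfold x. rewrite <- csum_conj, csum_root_unity_pow by lia.
        apply Cext; unfold Re, Im; simpl; ring. }
      intros k _. replace m with ((m - n) + n)%nat at 1 by lia.
      rewrite Cpow_conj, Cpow_add_r.
      transitivity (Cconj (x k) ^ (m - n) * (Cconj (x k) ^ n * x k ^ n))%C; [ring|].
      rewrite unit_conj_pow_mul by apply root_unity_pow_conj_mul. ring.
Qed.

Lemma csum_root_unity_conj N m n : (m + n < N)%nat ->
  csum (fun k => Cconj (root_unity N ^ k) ^ m * Cconj ((root_unity N ^ k) ^ n))%C N =
  if Nat.eqb (m + n) 0 then RtoC (INR N) else RtoC 0.
Proof.
  intros Hmn.
  rewrite (csum_ext _ (fun k => Cconj ((root_unity N ^ k) ^ (m + n)))%C)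
    by (intros k _; rewrite !Cpow_conj, Cpow_add_r; reflexivity).
  rewrite <- csum_conj.
  destruct (Nat.eqb_spec (m + n) 0) as [H0|H0].
  - rewrite H0, (csum_ext _ (fun _ => RtoC 1)), csum_const by reflexivity.
    apply Cext; unfold Re, Im; simpl; ring.
  - rewrite csum_root_unity_pow by lia. apply Cext; unfold Re, Im; simpl; ring.
Qed.

Definition ps_trunc (c : nat -> C) (M : nat) (z : C) : C := csum (fun n => c n * z ^ n)%C M.

Lemma csum_ps_trunc_rot (c : nat -> C) (y : C) (X : nat -> C) M N :
  csum (fun k => ps_trunc c M (y * X k)) N =
  csum (fun m => c m * y ^ m * csum (fun k => X k ^ m) N)%C M.
Proof.
  unfold ps_trunc. rewrite csum_swap. apply csum_ext; intros m _.
  rewrite <- csum_scal_l. apply csum_ext; intros k _. rewrite Cpow_mult_l. ring.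
Qed.

Lemma csum_ps_trunc_rot_mul (a b : nat -> C) (y z : C) (X Y : nat -> C) M N :
  csum (fun k => ps_trunc a M (y * X k) * ps_trunc b M (z * Y k))%C N =
  csum (fun m => csum (fun n =>
    a m * y ^ m * (b n * z ^ n) * csum (fun k => X k ^ m * Y k ^ n) N) M)%C M.
Proof.
  unfold ps_trunc.
  rewrite (csum_ext _ (fun k => csum (fun m => csum (fun n =>
    a m * y ^ m * (b n * z ^ n) * (X k ^ m * Y k ^ n)) M) M))%C.
  - rewrite csum_swap. apply csum_ext; intros m _.
    rewrite csum_swap. apply csum_ext; intros n _.
    rewrite <- csum_scal_l. reflexivity.
  - intros k _. rewrite csum_mult. apply csum_ext; intros m _. apply csum_ext; intros n _.
    rewrite !Cpow_mult_l. ring.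
Qed.

Section RootsOfUnitySampling.

Variables (f p : nat -> C) (u v : C) (M N : nat).
Hypotheses (HM : (0 < M)%nat) (HMN : (2 * M <= N)%nat).

Let w k := (root_unity N ^ k)%C.

Lemma csum_sample_F :
  csum (fun k => ps_trunc f M (u * Cconj (w k))) N = (RtoC (INR N) * f 0%nat)%C.
Proof.
  rewrite csum_ps_trunc_rot.
  rewrite (csum_ext _ (fun m => if Nat.eqb 0 m then RtoC (INR N) * f 0%nat else RtoC 0))%C.
  { apply csum_delta; exact HM. }
  intros m Hm.
  rewrite (csum_ext _ (fun k => Cconj (w k) ^ m * w k ^ 0))%C by (intros; simpl; ring).
  unfold w. rewrite csum_root_unity_orth by lia.
  destruct (Nat.eqb_spec m 0); destruct (Nat.eqb_spec 0 m); try lia; subst; simpl; ring.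
Qed.

Lemma csum_sample_P :
  csum (fun k => ps_trunc p M (v * w k)) N = (RtoC (INR N) * p 0%nat)%C.
Proof.
  rewrite csum_ps_trunc_rot.
  rewrite (csum_ext _ (fun n => if Nat.eqb 0 n then RtoC (INR N) * p 0%nat else RtoC 0))%C.
  { apply csum_delta; exact HM. }
  intros n Hn.
  rewrite (csum_ext _ (fun k => Cconj (w k) ^ 0 * w k ^ n))%C by (intros; simpl; ring).
  unfold w. rewrite csum_root_unity_orth by lia.
  destruct (Nat.eqb_spec 0 n) as [<-|]; simpl; ring.
Qed.

Lemma csum_sample_FP :
  csum (fun k => ps_trunc f M (u * Cconj (w k)) * ps_trunc p M (v * w k))%C N =
  (RtoC (INR N) * ps_trunc (hadamard f p) M (u * v))%C.
Proof.
  rewrite csum_ps_trunc_rot_mul. unfold ps_trunc. rewrite <- csum_scal_l.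
  apply csum_ext; intros m Hm.
  rewrite (csum_ext _ (fun n => if Nat.eqb m n
    then RtoC (INR N) * (hadamard f p m * (u * v) ^ m) else RtoC 0))%C.
  { apply csum_delta; exact Hm. }
  intros n Hn. unfold w. rewrite csum_root_unity_orth by lia.
  unfold hadamard. destruct (Nat.eqb_spec m n) as [<-|]; [rewrite Cpow_mult_l|]; ring.
Qed.

Lemma csum_sample_F_conjP :
  csum (fun k => ps_trunc f M (u * Cconj (w k)) * Cconj (ps_trunc p M (v * w k)))%C N =
  (RtoC (INR N) * (f 0%nat * Cconj (p 0%nat)))%C.
Proof.
  assert (Hconj : forall k, Cconj (ps_trunc p M (v * w k)) =
                       ps_trunc (fun n => Cconj (p n)) M (Cconj v * Cconj (w k))).
  { intros k. unfold ps_trunc. rewrite csum_conj. apply csum_ext; intros n _.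
    rewrite Cmult_conj, Cpow_conj, Cmult_conj. reflexivity. }
  rewrite (csum_ext _ (fun k => ps_trunc f M (u * Cconj (w k)) *
             ps_trunc (fun n => Cconj (p n)) M (Cconj v * Cconj (w k))))%C
    by (intros k _; rewrite Hconj; reflexivity).
  rewrite csum_ps_trunc_rot_mul.
  rewrite (csum_ext _ (fun m => if Nat.eqb 0 m
    then RtoC (INR N) * (f 0%nat * Cconj (p 0%nat)) else RtoC 0))%C.
  { apply csum_delta; exact HM. }
  intros m Hm.
  rewrite (csum_ext _ (fun n => if Nat.eqb 0 n then
    (if Nat.eqb 0 m then RtoC (INR N) * (f 0%nat * Cconj (p 0%nat)) else RtoC 0)
    else RtoC 0))%C.
  { apply csum_delta; exact HM. }
  intros n Hn.
  rewrite (csum_ext _ (fun k => Cconj (w k) ^ m * Cconj (w k ^ n)))%C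
    by (intros; rewrite Cpow_conj; reflexivity).
  unfold w. rewrite csum_root_unity_conj by lia.
  destruct (Nat.eqb_spec (m + n) 0); destruct (Nat.eqb_spec 0 n); destruct (Nat.eqb_spec 0 m);
    try lia; subst; simpl; ring.
Qed.

Lemma rsum_sample_F :
  rsum (fun k => Re (ps_trunc f M (u * Cconj (w k)))) N = INR N * Re (f 0%nat).
Proof. rewrite <- Re_csum, csum_sample_F. apply re_scal_l. Qed.

Variable p0 : R.
Hypothesis Hp0 : p 0%nat = RtoC p0.

Lemma rsum_sample_weights :
  rsum (fun k => 2 * Re (ps_trunc p M (v * w k)) - p0) N = INR N * p0.
Proof.
  rewrite (rsum_ext _ (fun k => Re (RtoC 2 * ps_trunc p M (v * w k) + - RtoC p0)%C))
    by (intros k _; destruct (ps_trunc p M (v * w k)); unfold Re; simpl; ring).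
  rewrite <- Re_csum, csum_plus, csum_scal_l, csum_const, csum_sample_P, Hp0.
  unfold Re; simpl. ring.
Qed.

Lemma rsum_sample_weighted_F :
  rsum (fun k => Re (ps_trunc f M (u * Cconj (w k))) * (2 * Re (ps_trunc p M (v * w k)) - p0)) N =
  INR N * Re (ps_trunc (hadamard f p) M (u * v)).
Proof.
  set (F k := ps_trunc f M (u * Cconj (w k))). set (P k := ps_trunc p M (v * w k)).
  assert (Hsum : csum (fun k => F k * P k + (F k * Cconj (P k) + - RtoC p0 * F k))%C N
                 = (RtoC (INR N) * ps_trunc (hadamard f p) M (u * v))%C).
  { rewrite !csum_plus, csum_scal_l. unfold F, P.
    rewrite csum_sample_FP, csum_sample_F_conjP, csum_sample_F, Hp0.
    replace (Cconj (RtoC p0)) with (RtoC p0) by (apply Cext; unfold Re, Im; simpl; ring).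
    ring. }
  apply (f_equal Re) in Hsum. rewrite Re_csum, re_scal_l in Hsum.
  rewrite <- Hsum. apply rsum_ext; intros k _.
  unfold F, P. destruct (ps_trunc f M (u * Cconj (w k))), (ps_trunc p M (v * w k)).
  unfold Re; simpl. ring.
Qed.

End RootsOfUnitySampling.

Lemma ex_series_Rle (a b : nat -> R) :
  (forall n, Rabs (a n) <= b n) -> ex_series b -> ex_series a.
Proof. exact (@ex_series_le R_AbsRing R_CompleteNormedModule a b). Qed.

Lemma ex_series_Rext (a b : nat -> R) :
  (forall n, a n = b n) -> ex_series a -> ex_series b.
Proof. exact (ex_series_ext a b). Qed.

Lemma ex_series_Rscal (k : R) (a : nat -> R) : ex_series a -> ex_series (fun n => k * a n).
Proof. exact (ex_series_scal_l k a). Qed.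

Lemma ex_series_Rplus (a b : nat -> R) :
  ex_series a -> ex_series b -> ex_series (fun n => a n + b n).
Proof. exact (ex_series_plus a b). Qed.

Lemma Series_zero : Series (fun _ => 0) = 0.
Proof. rewrite (Series_ext _ (fun _ => 0 * 0)) by (intros; ring). rewrite Series_scal_l. ring. Qed.

Lemma Series_nonneg (a : nat -> R) : (forall n, 0 <= a n) -> ex_series a -> 0 <= Series a.
Proof.
  intros Ha Hex. rewrite <- Series_zero. apply Series_le; auto. intros n; split; [lra | auto].
Qed.

Lemma Series_split (a : nat -> R) M :
  ex_series a -> Series a = rsum a M + Series (fun n => a (M + n)%nat).
Proof.
  intros Ha. induction M as [|M IH]; simpl rsum.
  - rewrite Rplus_0_l. reflexivity.
  - rewrite IH, (Series_incr_1 (fun n => a (M + n)%nat)).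
    + rewrite Nat.add_0_r. rewrite (Series_ext _ (fun n => a (S M + n)%nat)) by (intros; f_equal; lia).
      ring.
    + apply (ex_series_incr_n a M), Ha.
Qed.

Lemma is_lim_seq_Series_tail (a : nat -> R) :
  ex_series a -> is_lim_seq (fun M => Series (fun n => a (M + n)%nat)) 0.
Proof.
  intros Ha.
  apply (is_lim_seq_ext (fun M => Series a - rsum a M)).
  { intros M. rewrite (Series_split a M Ha). ring. }
  replace (Finite 0) with (Rbar_minus (Series a) (Series a)) by (simpl; f_equal; ring).
  apply is_lim_seq_minus'; [apply is_lim_seq_const|].
  apply is_lim_seq_incr_1. apply (is_lim_seq_ext (sum_n a)).
  { intros n; rewrite rsum_sum_n; reflexivity. }
  apply (Series_correct _ Ha).
Qed.

Definition abs_summable (u : nat -> C) : Prop := ex_series (fun n => Cmod (u n)).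

Lemma ex_series_Re (u : nat -> C) : abs_summable u -> ex_series (fun n => Re (u n)).
Proof. apply ex_series_Rle. intros n; apply Re_le_Cmod. Qed.

Lemma ex_series_Im (u : nat -> C) : abs_summable u -> ex_series (fun n => Im (u n)).
Proof. apply ex_series_Rle. intros n; apply Im_le_Cmod. Qed.

Lemma abs_summable_le (u : nat -> C) (b : nat -> R) :
  (forall n, Cmod (u n) <= b n) -> ex_series b -> abs_summable u.
Proof.
  intros H. apply ex_series_Rle. intros n. rewrite Rabs_pos_eq by apply Cmod_ge_0. apply H.
Qed.

Lemma abs_summable_scal (k : C) (u : nat -> C) :
  abs_summable u -> abs_summable (fun n => k * u n)%C.
Proof.
  intros Hu. apply (ex_series_Rext (fun n => Cmod k * Cmod (u n))).
  - intros n; rewrite Cmod_mult; reflexivity.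
  - apply ex_series_Rscal, Hu.
Qed.

Lemma CSeries_ext (u v : nat -> C) : (forall n, u n = v n) -> CSeries u = CSeries v.
Proof.
  intros H. unfold CSeries. f_equal; apply Series_ext; intros n; rewrite H; reflexivity.
Qed.

Lemma CSeries_plus (u v : nat -> C) : abs_summable u -> abs_summable v ->
  CSeries (fun n => u n + v n)%C = (CSeries u + CSeries v)%C.
Proof.
  intros Hu Hv. apply Cext; simpl.
  - apply (Series_plus (fun n => Re (u n)) (fun n => Re (v n))); apply ex_series_Re; auto.
  - apply (Series_plus (fun n => Im (u n)) (fun n => Im (v n))); apply ex_series_Im; auto.
Qed.

Lemma CSeries_scal (k : C) (u : nat -> C) : abs_summable u ->
  CSeries (fun n => k * u n)%C = (k * CSeries u)%C.
Proof.
  intros Hu.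
  assert (HRe := ex_series_Re u Hu). assert (HIm := ex_series_Im u Hu).
  apply Cext; unfold CSeries, Re, Im; simpl; rewrite <- !Series_scal_l.
  - rewrite <- Series_minus by (apply ex_series_Rscal; assumption).
    reflexivity.
  - rewrite <- Series_plus by (apply ex_series_Rscal; assumption).
    reflexivity.
Qed.

Lemma CSeries_incr_1 (u : nat -> C) : abs_summable u ->
  CSeries u = (u 0%nat + CSeries (fun n => u (S n)))%C.
Proof.
  intros Hu. apply Cext; simpl; apply Series_incr_1; [apply ex_series_Re | apply ex_series_Im]; auto.
Qed.

Lemma CSeries_zero_prefix (u : nat -> C) k : (forall i, (i < k)%nat -> u i = RtoC 0) ->
  CSeries u = CSeries (fun n => u (k + n)%nat).
Proof.
  intros H. unfold CSeries. f_equal;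
    apply (Series_incr_n_aux (fun n => _ (u n))); intros i Hi; rewrite H; auto.
Qed.

Lemma Rabs_Re_CSeries_le (u : nat -> C) : abs_summable u ->
  Rabs (Re (CSeries u)) <= Series (fun n => Cmod (u n)).
Proof.
  intros Hu. simpl. eapply Rle_trans.
  - apply Series_Rabs. apply (ex_series_Rle _ (fun n => Cmod (u n))); auto.
    intros n; rewrite Rabs_Rabsolu; apply Re_le_Cmod.
  - apply Series_le; auto. intros n; split; [apply Rabs_pos | apply Re_le_Cmod].
Qed.

Lemma Re_CSeries_sub_csum (u : nat -> C) M : abs_summable u ->
  Rabs (Re (CSeries u) - Re (csum u M)) <= Series (fun n => Cmod (u (M + n)%nat)).
Proof.
  intros Hu.
  assert (Htail : abs_summable (fun n => u (M + n)%nat))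
    by exact (proj1 (ex_series_incr_n (fun n => Cmod (u n)) M) Hu).
  replace (Re (CSeries u) - Re (csum u M)) with (Re (CSeries (fun n => u (M + n)%nat))).
  - apply Rabs_Re_CSeries_le, Htail.
  - simpl. rewrite (Series_split (fun n => Re (u n)) M) by (apply ex_series_Re, Hu).
    rewrite Re_csum. ring.
Qed.

(** * Power series in the unit disk *)

Definition ps (c : nat -> C) (z : C) : C := CSeries (fun n => c n * z ^ n)%C.

Definition abs_conv_in_U (c : nat -> C) : Prop :=
  forall t, 0 < t < 1 -> ex_series (fun n => Cmod (c n) * t ^ n).

Lemma abs_summable_ps_terms (c : nat -> C) z : abs_conv_in_U c -> Cmod z < 1 ->
  abs_summable (fun n => c n * z ^ n)%C.
Proof.
  intros Hc Hz. assert (H0 := Cmod_ge_0 z).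
  apply (abs_summable_le _ (fun n => Cmod (c n) * ((1 + Cmod z) / 2) ^ n)); [|apply Hc; lra].
  intros n. rewrite Cmod_mult, Cmod_pow.
  apply Rmult_le_compat_l; [apply Cmod_ge_0 | apply pow_incr; lra].
Qed.

Lemma analytic_in_U_of_abs_conv (c : nat -> C) : abs_conv_in_U c -> analytic_in_U c.
Proof.
  intros Hc z Hz.
  apply (@ex_series_le _ C_CompleteNormedModule _ (fun n => Cmod (c n * pow_n z n)%C)).
  - intros n; apply Rle_refl.
  - exact (abs_summable_ps_terms c z Hc Hz).
Qed.

(* Convergence at [t' = (1 + t) / 2] bounds the terms there, and then [t / t' < 1]
   gives a geometric majorant at [t]. *)
Lemma abs_conv_in_U_of_analytic (c : nat -> C) : analytic_in_U c -> abs_conv_in_U c.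
Proof.
  intros Hc t Ht.
  set (t' := (1 + t) / 2). set (q := t / t').
  assert (Ht' : 0 < t' < 1) by (unfold t'; lra).
  assert (Hq : 0 < q < 1).
  { unfold q; split; [apply Rdiv_lt_0_compat; lra|].
    apply (Rmult_lt_reg_r t'); [lra|]. unfold Rdiv. rewrite Rmult_assoc, Rinv_l; unfold t'; lra. }
  assert (Hz : Cmod (RtoC t') < 1) by (rewrite Cmod_R, Rabs_pos_eq; lra).
  destruct (Cauchy_ex_series _ (Hc _ Hz) (mkposreal 1 Rlt_0_1)) as [N HN].
  apply (ex_series_incr_n _ N).
  apply (ex_series_Rle _ (fun k => q ^ N * q ^ k)).
  - intros k.
    assert (Hb := HN (N + k)%nat (N + k)%nat ltac:(lia) ltac:(lia)).
    rewrite sum_n_n in Hb. change (Cmod (c (N + k)%nat * RtoC t' ^ (N + k))%C < 1) in Hb.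
    rewrite Cmod_mult, Cmod_pow, Cmod_R, Rabs_pos_eq in Hb by lra.
    rewrite Rabs_pos_eq by (apply Rmult_le_pos; [apply Cmod_ge_0 | apply pow_le; lra]).
    replace t with (q * t') by (unfold q; field; lra).
    rewrite <- pow_add, Rpow_mult_distr, (Rmult_comm (q ^ _)), <- Rmult_assoc.
    rewrite <- (Rmult_1_l (q ^ (N + k))) at 2.
    apply Rmult_le_compat_r; [apply pow_le|]; lra.
  - apply ex_series_Rscal, ex_series_geom. rewrite Rabs_pos_eq; lra.
Qed.

Lemma abs_conv_in_U_le (c d : nat -> C) :
  (forall n, Cmod (d n) <= Cmod (c n)) -> abs_conv_in_U c -> abs_conv_in_U d.
Proof.
  intros H Hc t Ht. apply (ex_series_Rle _ (fun n => Cmod (c n) * t ^ n)); [|apply Hc, Ht].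
  intros n. rewrite Rabs_pos_eq by (apply Rmult_le_pos; [apply Cmod_ge_0 | apply pow_le; lra]).
  apply Rmult_le_compat_r; [apply pow_le; lra | apply H].
Qed.

Lemma abs_conv_in_U_const_1 : abs_conv_in_U (fun _ => RtoC 1).
Proof.
  intros t Ht. apply (ex_series_Rext (fun n => t ^ n)).
  - intros n. rewrite Cmod_1. ring.
  - apply ex_series_geom. rewrite Rabs_pos_eq; lra.
Qed.

Lemma abs_conv_in_U_scal (k : C) (c : nat -> C) :
  abs_conv_in_U c -> abs_conv_in_U (fun n => k * c n)%C.
Proof.
  intros Hc t Ht. apply (ex_series_Rext (fun n => Cmod k * (Cmod (c n) * t ^ n))).
  - intros n. rewrite Cmod_mult. ring.
  - apply ex_series_Rscal, Hc, Ht.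
Qed.

Lemma abs_conv_in_U_plus (c d : nat -> C) :
  abs_conv_in_U c -> abs_conv_in_U d -> abs_conv_in_U (fun n => c n + d n)%C.
Proof.
  intros Hc Hd t Ht.
  apply (ex_series_Rle _ (fun n => Cmod (c n) * t ^ n + Cmod (d n) * t ^ n)).
  - intros n. rewrite Rabs_pos_eq by (apply Rmult_le_pos; [apply Cmod_ge_0 | apply pow_le; lra]).
    rewrite <- Rmult_plus_distr_r. apply Rmult_le_compat_r; [apply pow_le; lra | apply Cmod_triangle].
  - apply ex_series_Rplus; [apply Hc | apply Hd]; exact Ht.
Qed.

Lemma abs_conv_in_U_S (c : nat -> C) : abs_conv_in_U c -> abs_conv_in_U (fun n => c (S n)).
Proof.
  intros Hc t Ht.
  apply (ex_series_Rext (fun n => / t * (Cmod (c (S n)) * t ^ (S n)))).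
  - intros n. simpl. field. lra.
  - apply ex_series_Rscal.
    exact (proj1 (ex_series_incr_1 _) (Hc t Ht)).
Qed.

(* Bernoulli's inequality [(1 + h) ^ n >= 1 + n h] with [1 + h = t' / t] gives
   [n t ^ n <= t' ^ n / h]. *)
Lemma abs_conv_in_U_mul_INR (c : nat -> C) :
  abs_conv_in_U c -> abs_conv_in_U (fun n => RtoC (INR n) * c n)%C.
Proof.
  intros Hc t Ht.
  set (t' := (1 + t) / 2). set (h := t' / t - 1). set (q := t / t').
  assert (Ht' : 0 < t' < 1) by (unfold t'; lra).
  assert (Hh : 0 < h).
  { unfold h. apply Rlt_0_minus. apply (Rmult_lt_reg_r t); [lra|].
    unfold Rdiv; rewrite Rmult_assoc, Rinv_l by lra. unfold t'; lra. }
  assert (Hq : 0 < q) by (unfold q; apply Rdiv_lt_0_compat; lra).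
  assert (Hqh : q * (1 + h) = 1) by (unfold q, h; field; lra).
  apply (ex_series_Rle _ (fun n => / h * (Cmod (c n) * t' ^ n))).
  2: apply ex_series_Rscal, Hc, Ht'.
  intros n. rewrite Cmod_mult, Cmod_R, (Rabs_pos_eq (INR n)) by apply pos_INR.
  assert (Hn : INR n * q ^ n <= / h).
  { apply (Rmult_le_reg_r h); auto. rewrite Rinv_l by lra.
    assert (Hb := Rle_pow_lin h n ltac:(lra)).
    assert (0 < q ^ n) by (apply pow_lt; auto).
    assert (q ^ n * (1 + INR n * h) <= q ^ n * (1 + h) ^ n) by (apply Rmult_le_compat_l; lra).
    rewrite <- Rpow_mult_distr, Hqh, pow1 in H0. nra. }
  assert (0 <= Cmod (c n) * t' ^ n) by (apply Rmult_le_pos; [apply Cmod_ge_0 | apply pow_le; lra]).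
  replace t with (q * t') by (unfold q; field; lra).
  rewrite Rpow_mult_distr, Rabs_pos_eq.
  - replace (INR n * Cmod (c n) * (q ^ n * t' ^ n))
      with ((INR n * q ^ n) * (Cmod (c n) * t' ^ n)) by ring.
    apply Rmult_le_compat_r; auto.
  - apply Rmult_le_pos; [apply Rmult_le_pos; [apply pos_INR | apply Cmod_ge_0]|].
    apply Rmult_le_pos; apply pow_le; lra.
Qed.

Lemma abs_conv_in_U_ff (c : nat -> C) k :
  abs_conv_in_U c -> abs_conv_in_U (fun n => RtoC (INR (ff n k)) * c n)%C.
Proof.
  intros Hc. induction k as [|k IH].
  - apply (abs_conv_in_U_le c); auto. intros n. simpl. rewrite Cmult_1_l. apply Rle_refl.
  - refine (abs_conv_in_U_le _ _ _ (abs_conv_in_U_mul_INR _ IH)).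
    intros n. rewrite !Cmod_mult, !Cmod_R, !Rabs_pos_eq by apply pos_INR.
    simpl ff. rewrite mult_INR, <- Rmult_assoc.
    apply Rmult_le_compat_r; [apply Cmod_ge_0|].
    rewrite (Rmult_comm (INR n)). apply Rmult_le_compat_l; [apply pos_INR | apply le_INR; lia].
Qed.

(* At [r = sqrt t] the terms of one series are bounded by its sum. *)
Lemma abs_conv_in_U_hadamard (a b : nat -> C) :
  abs_conv_in_U a -> abs_conv_in_U b -> abs_conv_in_U (hadamard a b).
Proof.
  intros Ha Hb t Ht.
  set (r := sqrt t).
  assert (Hr : 0 < r < 1).
  { unfold r; split; [apply sqrt_lt_R0; lra|]. rewrite <- sqrt_1. apply sqrt_lt_1; lra. }
  assert (Er : t = r * r) by (unfold r; rewrite sqrt_sqrt; lra).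
  set (A n := Cmod (a n) * r ^ n).
  assert (HA : forall n, 0 <= A n) by (intros; apply Rmult_le_pos; [apply Cmod_ge_0 | apply pow_le; lra]).
  apply (ex_series_Rle _ (fun n => Series A * (Cmod (b n) * r ^ n))).
  2: apply ex_series_Rscal, Hb, Hr.
  intros n. unfold hadamard.
  rewrite Rabs_pos_eq by (apply Rmult_le_pos; [apply Cmod_ge_0 | apply pow_le; lra]).
  rewrite Cmod_mult, Er, Rpow_mult_distr.
  replace (Cmod (a n) * Cmod (b n) * (r ^ n * r ^ n)) with (A n * (Cmod (b n) * r ^ n))
    by (unfold A; ring).
  apply Rmult_le_compat_r; [apply Rmult_le_pos; [apply Cmod_ge_0 | apply pow_le; lra]|].
  assert (HexA : ex_series A) by apply Ha, Hr.
  rewrite (Series_split A (S n) HexA). simpl rsum.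
  assert (0 <= rsum A n) by (apply rsum_nonneg; auto).
  assert (0 <= Series (fun k => A (S n + k)%nat)).
  { apply Series_nonneg; auto. exact (proj1 (ex_series_incr_n A (S n)) HexA). }
  lra.
Qed.

Lemma ps_plus (c d : nat -> C) z : abs_conv_in_U c -> abs_conv_in_U d -> Cmod z < 1 ->
  ps (fun n => c n + d n)%C z = (ps c z + ps d z)%C.
Proof.
  intros Hc Hd Hz. unfold ps. rewrite <- CSeries_plus by (apply abs_summable_ps_terms; auto).
  apply CSeries_ext; intros n; ring.
Qed.

Lemma ps_scal (k : C) (c : nat -> C) z : abs_conv_in_U c -> Cmod z < 1 ->
  ps (fun n => k * c n)%C z = (k * ps c z)%C.
Proof.
  intros Hc Hz. unfold ps. rewrite <- CSeries_scal by (apply abs_summable_ps_terms; auto).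
  apply CSeries_ext; intros n; ring.
Qed.

Lemma ps_incr_1 (c : nat -> C) z : abs_conv_in_U c -> Cmod z < 1 ->
  ps c z = (c 0%nat + z * ps (fun n => c (S n)) z)%C.
Proof.
  intros Hc Hz. unfold ps at 1. rewrite CSeries_incr_1 by (apply abs_summable_ps_terms; auto).
  unfold ps. rewrite <- CSeries_scal by (apply abs_summable_ps_terms; auto; apply abs_conv_in_U_S, Hc).
  rewrite (CSeries_ext (fun n => c (S n) * z ^ S n) (fun n => z * (c (S n) * z ^ n)))%C
    by (intros; simpl; ring).
  simpl. ring.
Qed.

Lemma ps_at_0 (c : nat -> C) : abs_conv_in_U c -> ps c (RtoC 0) = c 0%nat.
Proof.
  intros Hc. rewrite ps_incr_1 by (auto; rewrite Cmod_0; lra). ring.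
Qed.

Lemma ps_geom (x : C) : Cmod x < 1 -> ps (fun _ => RtoC 1) x = (/ (1 - x))%C.
Proof.
  intros Hx.
  assert (Hx1 : (1 - x)%C <> RtoC 0).
  { intros H. assert (x = RtoC 1) by (symmetry; apply Ceq_minus, H). subst. rewrite Cmod_1 in Hx; lra. }
  assert (Hfix := ps_incr_1 _ x abs_conv_in_U_const_1 Hx). simpl in Hfix.
  set (S := ps (fun _ => RtoC 1) x) in *.
  assert (E : ((1 - x) * S)%C = RtoC 1).
  { transitivity (S - x * S)%C; [ring|]. rewrite Hfix at 1. ring. }
  field_simplify_eq; auto. rewrite <- E. ring.
Qed.

(** * Hadamard products *)

Lemma Re_ps_sub_trunc_le (c : nat -> C) (y : C) M : abs_conv_in_U c -> Cmod y < 1 ->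
  Rabs (Re (ps c y) - Re (ps_trunc c M y)) <=
  Series (fun n => Cmod (c (M + n)%nat) * Cmod y ^ (M + n)).
Proof.
  intros Hc Hy. unfold ps, ps_trunc.
  rewrite <- (Series_ext (fun n => Cmod (c (M + n)%nat * y ^ (M + n))%C))
    by (intros; rewrite Cmod_mult, Cmod_pow; reflexivity).
  apply Re_CSeries_sub_csum, abs_summable_ps_terms; assumption.
Qed.

Lemma Cmod_mul_root_unity_pow (y : C) N k : Cmod (y * root_unity N ^ k)%C = Cmod y.
Proof. rewrite Cmod_mult, Cmod_pow, Cmod_root_unity, pow1. ring. Qed.

Lemma Cmod_mul_conj_root_unity_pow (y : C) N k : Cmod (y * Cconj (root_unity N ^ k))%C = Cmod y.
Proof. rewrite Cmod_mult, Cmod_conj, Cmod_pow, Cmod_root_unity, pow1. ring. Qed.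

Lemma rsum_shifted_product (a w : nat -> R) (A B : R) n :
  rsum (fun k => (a k - A) * (w k + B)) n =
  rsum (fun k => a k * w k) n - A * rsum w n + B * rsum a n - INR n * (A * B).
Proof. induction n as [|n IH]; simpl rsum. simpl; ring. rewrite IH, S_INR. ring. Qed.

Section HadamardLowerBound.

Variables (f p : nat -> C) (lam p0 : R).
Hypotheses (Hf : abs_conv_in_U f) (Hp : abs_conv_in_U p) (Hp0 : p 0%nat = RtoC p0)
  (HF : forall w, Cmod w < 1 -> lam <= Re (ps f w))
  (HP : forall w, Cmod w < 1 -> p0 / 2 <= Re (ps p w)).

Variables (u v : C).
Hypotheses (Hu : Cmod u < 1) (Hv : Cmod v < 1).

Let tail (c : nat -> C) (y : C) (M : nat) : R :=
  Series (fun n => Cmod (c (M + n)%nat) * Cmod y ^ (M + n)).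

Lemma is_lim_seq_tail (c : nat -> C) (y : C) :
  abs_conv_in_U c -> Cmod y < 1 -> is_lim_seq (tail c y) 0.
Proof.
  intros Hc Hy. apply (is_lim_seq_Series_tail (fun n => Cmod (c n) * Cmod y ^ n)).
  apply (ex_series_Rext (fun n => Cmod (c n * y ^ n)%C)).
  - intros n; rewrite Cmod_mult, Cmod_pow; reflexivity.
  - apply abs_summable_ps_terms; assumption.
Qed.

Lemma Re_ps_trunc_hadamard_ge M : (0 < M)%nat ->
  lam * p0 - (tail f u M * p0 + 2 * tail p v M * (Re (f 0%nat) - lam + tail f u M))
  <= Re (ps_trunc (hadamard f p) M (u * v)).
Proof.
  intros HM. set (N := (2 * M)%nat). set (w k := (root_unity N ^ k)%C).
  set (a k := Re (ps_trunc f M (u * Cconj (w k)))).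
  set (g k := 2 * Re (ps_trunc p M (v * w k)) - p0).
  assert (HN : 0 < INR N) by (apply lt_0_INR; unfold N; lia).
  assert (Ha : forall k, lam - tail f u M <= a k).
  { intros k. assert (Hk := Re_ps_sub_trunc_le f (u * Cconj (w k)) M Hf).
    assert (HFk := HF (u * Cconj (w k))%C).
    unfold w in Hk, HFk. rewrite Cmod_mul_conj_root_unity_pow in Hk, HFk.
    specialize (HFk Hu). apply Rabs_le_between in Hk; [|exact Hu]. unfold a, w, tail. lra. }
  assert (Hg : forall k, - (2 * tail p v M) <= g k).
  { intros k. assert (Hk := Re_ps_sub_trunc_le p (v * w k) M Hp).
    assert (HPk := HP (v * w k)%C).
    unfold w in Hk, HPk. rewrite Cmod_mul_root_unity_pow in Hk, HPk.
    specialize (HPk Hv). apply Rabs_le_between in Hk; [|exact Hv]. unfold g, w, tail. lra. }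
  assert (Hsum := rsum_shifted_product a g (lam - tail f u M) (2 * tail p v M) N).
  assert (Hpos : 0 <= rsum (fun k => (a k - (lam - tail f u M)) * (g k + 2 * tail p v M)) N).
  { apply rsum_nonneg. intros k _. apply Rmult_le_pos; [specialize (Ha k) | specialize (Hg k)]; lra. }
  rewrite Hsum in Hpos. unfold a, g, w in Hpos.
  rewrite (rsum_sample_weighted_F f p u v M N HM (le_n _) p0 Hp0),
    (rsum_sample_weights p v M N HM (le_n _) p0 Hp0),
    (rsum_sample_F f u M N HM (le_n _)) in Hpos.
  apply (Rmult_le_reg_l (INR N)); auto. nra.
Qed.

Lemma Re_ps_hadamard_ge_mul : lam * p0 <= Re (ps (hadamard f p) (u * v)).
Proof.
  set (H := hadamard f p).
  assert (HH : abs_conv_in_U H) by (apply abs_conv_in_U_hadamard; assumption).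
  assert (Huv : Cmod (u * v) < 1).
  { rewrite Cmod_mult. assert (H0 := Cmod_ge_0 u). assert (H1 := Cmod_ge_0 v). nra. }
  set (err M := tail f u M * p0 + 2 * tail p v M * (Re (f 0%nat) - lam + tail f u M)
                + tail H (u * v) M).
  assert (Herr : is_lim_seq err 0).
  { replace (Finite 0) with (Finite (0 * p0 + 2 * 0 * (Re (f 0%nat) - lam + 0) + 0))
      by (f_equal; ring).
    assert (HtF := is_lim_seq_tail f u Hf Hu).
    apply is_lim_seq_plus'; [apply is_lim_seq_plus'|].
    - apply is_lim_seq_mult'; [exact HtF | apply is_lim_seq_const].
    - apply is_lim_seq_mult'; [apply is_lim_seq_mult'; [apply is_lim_seq_const|]|].
      + apply is_lim_seq_tail; assumption.
      + apply is_lim_seq_plus'; [apply is_lim_seq_const | exact HtF].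
    - apply is_lim_seq_tail; assumption. }
  assert (Hle : forall M, lam * p0 - err (S M) <= Re (ps H (u * v))).
  { intros M. assert (HM := Re_ps_trunc_hadamard_ge (S M) ltac:(lia)). fold H in HM.
    assert (HT := Re_ps_sub_trunc_le H (u * v) (S M) HH Huv).
    apply Rabs_le_between in HT. unfold err, tail in *. lra. }
  assert (Hlim : is_lim_seq (fun M => lam * p0 - err (S M)) (lam * p0)).
  { replace (Finite (lam * p0)) with (Finite (lam * p0 - 0)) by (f_equal; ring).
    apply is_lim_seq_minus'; [apply is_lim_seq_const | apply (is_lim_seq_incr_1 err), Herr]. }
  exact (is_lim_seq_le _ _ _ _ Hle Hlim (is_lim_seq_const _)).
Qed.

End HadamardLowerBound.

Lemma Re_ps_hadamard_ge (f p : nat -> C) (lam p0 : R) :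
  abs_conv_in_U f -> abs_conv_in_U p -> p 0%nat = RtoC p0 ->
  (forall w, Cmod w < 1 -> lam <= Re (ps f w)) ->
  (forall w, Cmod w < 1 -> p0 / 2 <= Re (ps p w)) ->
  forall z, Cmod z < 1 -> lam * p0 <= Re (ps (hadamard f p) z).
Proof.
  intros Hf Hp Hp0 HF HP z Hz.
  set (s := (1 + Cmod z) / 2). assert (H0 := Cmod_ge_0 z).
  assert (Hs : 0 < s < 1) by (unfold s; lra).
  replace z with ((z / RtoC s) * RtoC s)%C by (field; intros E; injection E; lra).
  apply Re_ps_hadamard_ge_mul; auto.
  - rewrite Cmod_div, Cmod_R, Rabs_pos_eq by (lra || (intros E; injection E; lra)).
    apply (Rmult_lt_reg_r s); [lra|]. unfold Rdiv. rewrite Rmult_assoc, Rinv_l; unfold s; lra.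
  - rewrite Cmod_R, Rabs_pos_eq; lra.
Qed.

Lemma Re_inv_one_sub_ge (x : C) (r : R) : Cmod x <= r < 1 -> 1 / (1 + r) <= Re (/ (1 - x)).
Proof.
  intros [Hxr Hr1]. assert (H0 := Cmod_ge_0 x).
  assert (Hsq := Cmod2_alt x).
  destruct x as [a b]. unfold Re, Im in Hsq; simpl in Hsq.
  assert (Hab : a * a + b * b <= r * r) by nra.
  assert (Ha : - r <= a <= r) by nra.
  assert (HD : 0 < (1 - a) ^ 2 + b ^ 2) by nra.
  replace (Re (/ (1 - (a, b)))%C) with ((1 - a) / ((1 - a) ^ 2 + b ^ 2))
    by (unfold Cinv, Re; simpl; f_equal; ring).
  replace ((1 - a) / ((1 - a) ^ 2 + b ^ 2)) with (1 / (1 + r) +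
    ((1 - r) * (r + a) + (r * r - (a * a + b * b))) / ((1 + r) * ((1 - a) ^ 2 + b ^ 2)))
    by (field; lra).
  assert (0 <= ((1 - r) * (r + a) + (r * r - (a * a + b * b))) / ((1 + r) * ((1 - a) ^ 2 + b ^ 2))).
  { apply Rdiv_le_0_compat; [nra | apply Rmult_lt_0_compat; lra]. }
  lra.
Qed.

(* Harnack's inequality, obtained from [Re_ps_hadamard_ge] with the multiplier
   [q n = r ^ n - c 0 ^ n], whose series [1 / (1 - r w) - c] has real part at
   least [(1 - c) / 2] exactly when [c = (1 - r) / (1 + r)]. *)
Lemma harnack_ps (f : nat -> C) (lam r : R) :
  abs_conv_in_U f -> (forall w, Cmod w < 1 -> lam <= Re (ps f w)) -> 0 <= r < 1 ->
  forall w, Cmod w < 1 ->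
  lam + (1 - r) / (1 + r) * (Re (ps f (RtoC 0)) - lam) <= Re (ps f (RtoC r * w)).
Proof.
  intros Hf HF Hr w Hw.
  set (c := (1 - r) / (1 + r)).
  assert (Hc : 0 < c <= 1).
  { unfold c; split; [apply Rdiv_lt_0_compat; lra|].
    apply (Rmult_le_reg_r (1 + r)); [lra|]. unfold Rdiv. rewrite Rmult_assoc, Rinv_l; lra. }
  set (q n := (RtoC r ^ n - RtoC c * RtoC 0 ^ n)%C).
  assert (Hq : abs_conv_in_U q).
  { apply (abs_conv_in_U_le (fun _ => RtoC 1)); [|exact abs_conv_in_U_const_1].
    intros [|n]; unfold q; simpl Cpow; rewrite Cmod_1.
    - replace (1 - RtoC c * 1)%C with (RtoC (1 - c)) by (rewrite RtoC_minus; ring).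
      rewrite Cmod_R, Rabs_pos_eq; lra.
    - replace (RtoC r * RtoC r ^ n - RtoC c * (RtoC 0 * RtoC 0 ^ n))%C with (RtoC (r ^ S n))
        by (rewrite <- RtoC_pow; simpl; rewrite RtoC_mult; ring).
      rewrite Cmod_R, Rabs_pos_eq by (apply pow_le; lra). rewrite <- (pow1 (S n)). apply pow_incr; lra. }
  assert (Hr0 : Cmod (RtoC r) <= r) by (rewrite Cmod_R, Rabs_pos_eq; lra).
  assert (H00 : Cmod (RtoC 0) < 1) by (rewrite Cmod_0; lra).
  assert (Hrw : forall y, Cmod y < 1 -> Cmod (RtoC r * y) < 1).
  { intros y Hy. rewrite Cmod_mult. assert (H0 := Cmod_ge_0 y). nra. }
  assert (HQ : forall y, Cmod y < 1 -> (1 - c) / 2 <= Re (ps q y)).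
  { intros y Hy.
    assert (Hps : ps q y = (ps (fun _ => RtoC 1) (RtoC r * y) + RtoC (- c) * ps (fun _ => RtoC 1) (RtoC 0))%C).
    { unfold ps. rewrite <- CSeries_scal, <- CSeries_plus
        by (first [apply abs_summable_ps_terms | apply abs_summable_scal, abs_summable_ps_terms];
            auto using abs_conv_in_U_const_1).
      apply CSeries_ext. intros n. unfold q. rewrite Cpow_mult_l, RtoC_opp.
      destruct n; simpl; ring. }
    rewrite Hps, !ps_geom by auto.
    replace (/ (1 - RtoC 0))%C with (RtoC 1) by field.
    rewrite Re_add, re_scal_l.
    assert (Hre := Re_inv_one_sub_ge (RtoC r * y) r).
    rewrite Cmod_mult, Cmod_R, Rabs_pos_eq in Hre by lra.
    assert (Hy0 := Cmod_ge_0 y).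
    assert (Hb : 1 / (1 + r) <= Re (/ (1 - RtoC r * y))) by (apply Hre; split; nra).
    replace ((1 - c) / 2) with (1 / (1 + r) - c) by (unfold c; field; lra).
    change (Re (RtoC 1)) with 1. lra. }
  assert (Hq0 : q 0%nat = RtoC (1 - c)) by (unfold q; simpl; rewrite RtoC_minus; ring).
  assert (Hge := Re_ps_hadamard_ge f q lam (1 - c) Hf Hq Hq0 HF HQ w Hw).
  assert (Hconv : ps (hadamard f q) w = (ps f (RtoC r * w) + RtoC (- c) * ps f (RtoC 0))%C).
  { unfold ps. rewrite <- CSeries_scal, <- CSeries_plus
      by (first [apply abs_summable_ps_terms | apply abs_summable_scal, abs_summable_ps_terms];
          auto).
    apply CSeries_ext. intros n. unfold hadamard, q. rewrite Cpow_mult_l, RtoC_opp.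
    destruct n; simpl; ring. }
  rewrite Hconv, Re_add, re_scal_l in Hge.
  nra.
Qed.

Lemma Re_ps_hadamard_gt (f p : nat -> C) (lam : R) :
  abs_conv_in_U f -> abs_conv_in_U p -> p 0%nat = RtoC 1 ->
  (forall w, Cmod w < 1 -> lam < Re (ps f w)) ->
  (forall w, Cmod w < 1 -> 1 / 2 <= Re (ps p w)) ->
  forall z, Cmod z < 1 -> lam < Re (ps (hadamard f p) z).
Proof.
  intros Hf Hp Hp0 HF HP z Hz.
  set (r := (1 + Cmod z) / 2). set (c := (1 - r) / (1 + r)).
  assert (H0 := Cmod_ge_0 z). assert (Hr : 0 < r < 1) by (unfold r; lra).
  assert (Hc : 0 < c) by (unfold c; apply Rdiv_lt_0_compat; lra).
  assert (Hf0 : lam < Re (ps f (RtoC 0))) by (apply HF; rewrite Cmod_0; lra).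
  set (fr n := (f n * RtoC r ^ n)%C).
  assert (Hfr : abs_conv_in_U fr).
  { apply (abs_conv_in_U_le f); auto. intros n. unfold fr.
    rewrite Cmod_mult, Cmod_pow, Cmod_R, Rabs_pos_eq by lra.
    rewrite <- (Rmult_1_r (Cmod (f n))) at 2.
    apply Rmult_le_compat_l; [apply Cmod_ge_0|]. rewrite <- (pow1 n). apply pow_incr; lra. }
  assert (Hharnack : forall w, Cmod w < 1 -> lam + c * (Re (ps f (RtoC 0)) - lam) <= Re (ps fr w)).
  { intros w Hw.
    replace (ps fr w) with (ps f (RtoC r * w))
      by (unfold ps, fr; apply CSeries_ext; intros n; rewrite Cpow_mult_l; ring).
    apply harnack_ps; auto; [intros; apply Rlt_le, HF; auto | lra]. }
  assert (Hr0 : RtoC r <> RtoC 0) by (intros E; injection E; lra).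
  assert (Hz' : Cmod (z / RtoC r) < 1).
  { rewrite Cmod_div, Cmod_R, Rabs_pos_eq by (auto; lra).
    apply (Rmult_lt_reg_r r); [lra|]. unfold Rdiv. rewrite Rmult_assoc, Rinv_l; unfold r; lra. }
  assert (Hge := Re_ps_hadamard_ge fr p _ 1 Hfr Hp Hp0 Hharnack HP _ Hz').
  replace (ps (hadamard fr p) (z / RtoC r)) with (ps (hadamard f p) z) in Hge.
  - nra.
  - unfold ps, hadamard, fr. apply CSeries_ext; intros n.
    replace z with (RtoC r * (z / RtoC r))%C at 1 by (field; exact Hr0).
    rewrite Cpow_mult_l. ring.
Qed.

(** * The operator [Lop] and the quotient [phi(z)/z] as power series *)

Definition Lop_multiplier (gamma delta : R) (m : nat) : R :=
  gamma * INR (ff m 1) + delta * INR (ff m 2) + (delta - gamma) / 2 * INR (ff m 3).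

Definition Lop_coef (gamma delta : R) (c : nat -> C) (n : nat) : C :=
  (RtoC (Lop_multiplier gamma delta (S n)) * c (S n))%C.

Lemma abs_conv_in_U_Lop_coef (gamma delta : R) (c : nat -> C) :
  abs_conv_in_U c -> abs_conv_in_U (Lop_coef gamma delta c).
Proof.
  intros Hc. apply (abs_conv_in_U_S (fun m => RtoC (Lop_multiplier gamma delta m) * c m)%C).
  apply (abs_conv_in_U_le (fun m => RtoC gamma * (RtoC (INR (ff m 1)) * c m)
           + RtoC delta * (RtoC (INR (ff m 2)) * c m)
           + RtoC ((delta - gamma) / 2) * (RtoC (INR (ff m 3)) * c m))%C).
  - intros m. right. f_equal. unfold Lop_multiplier. rewrite !RtoC_plus, !RtoC_mult. ring.
  - repeat apply abs_conv_in_U_plus; apply abs_conv_in_U_scal, abs_conv_in_U_ff, Hc.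
Qed.

Lemma ff_lt (m k : nat) : (m < k)%nat -> ff m k = 0%nat.
Proof.
  revert m; induction k as [|k IH]; intros m Hm; [lia|]. simpl.
  destruct (Nat.eq_dec m k) as [->|]; [rewrite Nat.sub_diag | rewrite IH]; lia.
Qed.

Lemma abs_conv_in_U_shift (c : nat -> C) k :
  abs_conv_in_U c -> abs_conv_in_U (fun n => c (k + n)%nat).
Proof.
  revert c; induction k as [|k IH]; intros c Hc; [exact Hc|].
  exact (IH (fun n => c (S n)) (abs_conv_in_U_S c Hc)).
Qed.

Lemma PSder_eq_ps k (c : nat -> C) z :
  PSder k c z = ps (fun n => RtoC (INR (ff (k + n) k)) * c (k + n)%nat)%C z.
Proof.
  unfold PSder, ps. rewrite (CSeries_zero_prefix _ k).
  - apply CSeries_ext; intros n. replace (k + n - k)%nat with n by lia. reflexivity.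
  - intros i Hi. rewrite ff_lt by lia. simpl. ring.
Qed.

Lemma zpow_PSder k (c : nat -> C) z : abs_conv_in_U c -> Cmod z < 1 ->
  (z ^ k * PSder (S k) c z)%C = ps (fun n => RtoC (INR (ff (S n) (S k))) * c (S n))%C z.
Proof.
  intros Hc Hz. rewrite PSder_eq_ps. unfold ps.
  rewrite <- CSeries_scal.
  2: { apply abs_summable_ps_terms; auto.
       apply (abs_conv_in_U_shift (fun m => RtoC (INR (ff m (S k))) * c m)%C), abs_conv_in_U_ff, Hc. }
  rewrite (CSeries_zero_prefix (fun n => _ * z ^ n)%C k).
  - apply CSeries_ext; intros n. rewrite Cpow_add_r, Nat.add_succ_l. ring.
  - intros i Hi. rewrite ff_lt by lia. simpl. ring.
Qed.

Lemma Lop_eq_ps (gamma delta : R) (c : nat -> C) z : abs_conv_in_U c -> Cmod z < 1 ->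
  Lop gamma delta c z = ps (Lop_coef gamma delta c) z.
Proof.
  intros Hc Hz.
  assert (Hk : forall k, abs_conv_in_U (fun n => RtoC (INR (ff (S n) k)) * c (S n))%C)
    by (intros k; apply (abs_conv_in_U_S (fun m => RtoC (INR (ff m k)) * c m)%C), abs_conv_in_U_ff, Hc).
  transitivity (RtoC gamma * (z ^ 0 * PSder 1 c z) + RtoC delta * (z ^ 1 * PSder 2 c z)
                + RtoC ((delta - gamma) / 2) * (z ^ 2 * PSder 3 c z))%C.
  { unfold Lop. simpl Cpow. ring. }
  rewrite !zpow_PSder by assumption.
  rewrite <- !ps_scal, <- !ps_plus by
    (repeat first [apply abs_conv_in_U_plus | apply abs_conv_in_U_scal | apply Hk | assumption]).
  unfold ps. apply CSeries_ext; intros n. unfold Lop_coef, Lop_multiplier.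
  rewrite !RtoC_plus, !RtoC_mult. ring.
Qed.

Lemma phi_over_z_eq_ps (phi : nat -> C) w : in_A phi -> Cmod w < 1 ->
  phi_over_z phi w = ps (fun n => phi (S n)) w.
Proof.
  intros [Han [H0 H1]] Hw. apply abs_conv_in_U_of_analytic in Han.
  unfold phi_over_z. destruct (Req_EM_T (Cmod w) 0) as [E|E].
  - apply Cmod_eq_0 in E. subst w. rewrite ps_at_0 by (apply abs_conv_in_U_S, Han). now rewrite H1.
  - assert (Hw0 : w <> RtoC 0) by (intros ->; apply E, Cmod_0).
    replace (PSval phi w) with (ps phi w).
    + rewrite ps_incr_1, H0 by assumption. field. exact Hw0.
    + unfold PSval. rewrite PSder_eq_ps. unfold ps. apply CSeries_ext; intros n. simpl. ring.
Qed.

Lemma Lop_hadamard_eq_ps (gamma delta : R) (c d : nat -> C) z :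
  abs_conv_in_U c -> abs_conv_in_U d -> Cmod z < 1 ->
  Lop gamma delta (hadamard c d) z = ps (hadamard (Lop_coef gamma delta c) (fun n => d (S n))) z.
Proof.
  intros Hc Hd Hz. rewrite Lop_eq_ps by (try apply abs_conv_in_U_hadamard; assumption).
  unfold ps. apply CSeries_ext; intros n. unfold Lop_coef, hadamard. ring.
Qed.

Lemma in_H0_hadamard (a b phi : nat -> C) :
  in_H0 a b -> in_A phi -> in_H0 (hadamard a phi) (hadamard b phi).
Proof.
  intros [Ha [Hb [Ha0 [Ha1 [Hb0 Hb1]]]]] [Hphi [Hphi0 Hphi1]].
  apply abs_conv_in_U_of_analytic in Ha, Hb, Hphi.
  repeat split; try (apply analytic_in_U_of_abs_conv, abs_conv_in_U_hadamard; assumption);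
    unfold hadamard; rewrite ?Ha0, ?Ha1, ?Hb0, ?Hb1, ?Hphi0, ?Hphi1; ring.
Qed.

Lemma exists_Re_mul_eq_opp_Cmod (L : C) : exists e : C, Cmod e <= 1 /\ Re (e * L) = - Cmod L.
Proof.
  destruct (Req_dec (Cmod L) 0) as [H0|H0].
  - exists (RtoC 0). rewrite Cmod_0, H0, Cmult_0_l. split; [lra|]. simpl; ring.
  - exists (- Cconj L / RtoC (Cmod L))%C.
    assert (HL : RtoC (Cmod L) <> RtoC 0) by (intros E; injection E; auto).
    split.
    + rewrite Cmod_div, Cmod_opp, Cmod_conj, Cmod_R, Rabs_pos_eq by (auto; apply Cmod_ge_0).
      right. field. exact H0.
    + replace (- Cconj L / RtoC (Cmod L) * L)%C with (RtoC (- Cmod L)); [reflexivity|].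
      replace (- Cconj L / RtoC (Cmod L) * L)%C with (- (L * Cconj L) / RtoC (Cmod L))%C
        by (field; exact HL).
      rewrite <- Cmod2_conj, RtoC_pow, RtoC_opp. field. exact HL.
Qed.

Lemma Re_sub_gt_Cmod_hadamard (A B p : nat -> C) (lam : R) :
  abs_conv_in_U A -> abs_conv_in_U B -> abs_conv_in_U p -> p 0%nat = RtoC 1 ->
  (forall w, Cmod w < 1 -> 1 / 2 <= Re (ps p w)) ->
  (forall w, Cmod w < 1 -> Re (ps A w - RtoC lam) > Cmod (ps B w)) ->
  forall z, Cmod z < 1 -> Re (ps (hadamard A p) z - RtoC lam) > Cmod (ps (hadamard B p) z).
Proof.
  intros HA HB Hp Hp0 HP HAB z Hz.
  destruct (exists_Re_mul_eq_opp_Cmod (ps (hadamard B p) z)) as [e [He HeL]].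
  set (f n := (A n + e * B n)%C).
  assert (Hf : abs_conv_in_U f) by (apply abs_conv_in_U_plus, abs_conv_in_U_scal; assumption).
  assert (HF : forall w, Cmod w < 1 -> lam < Re (ps f w)).
  { intros w Hw. unfold f. rewrite ps_plus, ps_scal, Re_add by auto using abs_conv_in_U_scal.
    specialize (HAB w Hw). rewrite Re_sub_RtoC in HAB.
    assert (Hle := Re_le_Cmod (e * ps B w)). rewrite Cmod_mult in Hle.
    apply Rabs_le_between in Hle. assert (H0 := Cmod_ge_0 (ps B w)). nra. }
  assert (Hgt := Re_ps_hadamard_gt f p lam Hf Hp Hp0 HF HP z Hz).
  replace (ps (hadamard f p) z) with (ps (hadamard A p) z + e * ps (hadamard B p) z)%C in Hgt.
  - rewrite Re_add, HeL in Hgt. rewrite Re_sub_RtoC. lra.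
  - rewrite <- ps_scal, <- ps_plus by (auto using abs_conv_in_U_scal, abs_conv_in_U_hadamard).
    unfold ps. apply CSeries_ext; intros n. unfold f, hadamard. ring.
Qed.

Theorem theorem17 (gamma delta lambda : R) (a b phi : nat -> C) :
  0 <= lambda -> lambda < gamma -> gamma <= delta ->
  RH0 gamma delta lambda a b ->
  in_A phi ->
  (forall z : C, Cmod z < 1 -> Re (phi_over_z phi z) > 1 / 2) ->
  RH0 gamma delta lambda (fst (harm_conv a b phi)) (snd (harm_conv a b phi)).
Proof.
  intros _ _ _ [Hab HR] HphiA Hphi_z.
  pose proof Hab as [Ha [Hb _]]. pose proof HphiA as [Hphi [_ Hphi1]].
  apply abs_conv_in_U_of_analytic in Ha, Hb, Hphi.
  cbn [harm_conv fst snd]. split; [apply in_H0_hadamard; assumption|].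
  intros z Hz. rewrite !Lop_hadamard_eq_ps by assumption.
  apply Re_sub_gt_Cmod_hadamard; auto using abs_conv_in_U_Lop_coef, abs_conv_in_U_S.
  - intros w Hw. rewrite <- phi_over_z_eq_ps by assumption. apply Rlt_le, Hphi_z, Hw.
  - intros w Hw. rewrite <- !Lop_eq_ps by assumption. apply HR, Hw.
Qed.
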